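(* For all real numbers $m>0$ and $p>0$, the Harmonic Vase $HV(m,p)\subset\mathbb{R}^3$ is compact.
   Context: Use cylindrical coordinates $(r,\varphi,z)$ on $\mathbb{R}^3$, so that a point has Cartesian coordinates $(r\cos\varphi, r\sin\varphi, z)$, with $\varphi\in[-\pi,\pi]$. For $m,p>0$, the Harmonic Vase $HV(m,p)$ is the union of two sets: (1) the pedestal $\{(x,y,0)\in\mathbb{R}^3 : x^2+y^2\le 9\}$; (2) the wall $W(m,p)=\{(r\cos\varphi, r\sin\varphi, z) : z\in(0,m],\ \varphi\in[-\pi,\pi],\ r=\tfrac{|\varphi|}{\pi}\sin\tfrac{\pi p}{z}+2\}$. *)

(* R : realType, R^3 as the product space (R * R) * R
   (product topology = Euclidean topology). *)
From HB Require Import structures.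
From mathcomp Require Import all_boot all_order all_algebra.
From mathcomp Require Import all_classical all_reals all_analysis.
Set Implicit Arguments. Unset Strict Implicit. Unset Printing Implicit Defensive.
Import Order.TTheory GRing.Theory Num.Theory.
Import numFieldNormedType.Exports.
Local Open Scope classical_set_scope.
Local Open Scope ring_scope.

Definition cyl {R : realType} (r phi z : R) : (R * R) * R :=
  ((r * cos phi, r * sin phi), z).

Definition pedestal (R : realType) : set ((R * R) * R) :=
  [set v | v.2 = 0 /\ v.1.1 ^+ 2 + v.1.2 ^+ 2 <= 9].

Definition wall (R : realType) (m p : R) : set ((R * R) * R) :=
  [set v | exists z phi : R,
      [/\ 0 < z <= m, - pi <= phi <= pi &
          v = cyl (`|phi| / pi * sin (pi * p / z) + 2) phi z]].

Definition harmonic_vase (R : realType) (m p : R) : set ((R * R) * R) :=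
  @pedestal R `|` @wall R m p.

From HB Require Import structures.
From mathcomp Require Import all_boot all_order all_algebra.
From mathcomp Require Import all_classical all_reals all_analysis.
From mathcomp Require Import lra.
Import Order.TTheory GRing.Theory Num.Theory.
Import numFieldNormedType.Exports.
Local Open Scope classical_set_scope.
Local Open Scope ring_scope.

(* The vase lies in the solid cylinder of radius 3 and height m, so it is
   bounded, and it suffices to show that it is closed.  A limit point v of the
   vase lies in that cylinder; if its height is 0 it is on the pedestal.
   Otherwise all vase points near v have height at least c := v.2 / 2 > 0, so
   they are wall points, and the wall above height c is the continuous image
   of the rectangle [c, m] x [-pi, pi], hence compact and closed: v is on the
   wall.  The oscillation of sin (pi p / z) as z -> 0 is harmless because it
   only happens near the pedestal, which contains all the limit points. *)

Lemma closure_setI_nbhs {T : topologicalType} {A B : set T} {v : T} :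
  closure A v -> nbhs v B -> closure (A `&` B) v.
Proof.
move=> Av Bv N Nv; have [w [Aw [Nw Bw]]] := Av _ (filterI Nv Bv).
by exists w.
Qed.

Section HarmonicVase.
Context {R : realType}.

Lemma continuous_cyl {T : topologicalType} (r phi z : T -> R) :
  continuous r -> continuous phi -> continuous z ->
  continuous (fun t => cyl (r t) (phi t) (z t)).
Proof.
move=> rc phic zc t; apply: (cvg_pair (G := nbhs _) (H := nbhs _)); last exact: zc.
apply: (cvg_pair (G := nbhs _) (H := nbhs _)); apply: cvgM; first exact: rc.
- by apply: continuous_comp; [exact: phic | exact: continuous_cos].
- exact: rc.
- by apply: continuous_comp; [exact: phic | exact: continuous_sin].
Qed.

Lemma cyl_norm2 (r phi z : R) :
  (cyl r phi z).1.1 ^+ 2 + (cyl r phi z).1.2 ^+ 2 = r ^+ 2.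
Proof. by rewrite /= !exprMn -mulrDr cos2Dsin2 mulr1. Qed.

Definition wall_radius (p z phi : R) : R := `|phi| / pi * sin (pi * p / z) + 2.

Lemma wall_radius_bounds (p z phi : R) : - pi <= phi <= pi ->
  1 <= wall_radius p z phi <= 3.
Proof.
move=> /andP[phi_ge phi_le]; have pi_gt0 := pi_gt0 R.
have a_ge0 : 0 <= `|phi| / pi by rewrite divr_ge0 // ltW.
have a_le1 : `|phi| / pi <= 1 by rewrite ler_pdivrMr // mul1r ler_norml phi_ge.
have : `| `|phi| / pi * sin (pi * p / z) | <= 1.
  by rewrite normrM ger0_norm // -[1]mulr1 ler_pM // sin_max.
by rewrite ler_norml /wall_radius => /andP[? ?]; apply/andP; split; lra.
Qed.

Definition solid_cylinder (h : R) : set ((R * R) * R) :=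
  [set v | 0 <= v.2 <= h /\ v.1.1 ^+ 2 + v.1.2 ^+ 2 <= 9].

Lemma harmonic_vase_sub_cylinder (m p : R) : 0 < m ->
  harmonic_vase m p `<=` solid_cylinder m.
Proof.
move=> m_gt0 v [[v2_eq0 v_le]|[z [phi [/andP[z_gt0 z_le] phi_bd ->]]]].
  by split => //; rewrite v2_eq0 lexx ltW.
split; first by rewrite /= ltW.
rewrite cyl_norm2; have /andP[r_ge1 r_le3] := wall_radius_bounds p z _ phi_bd.
by move: r_ge1 r_le3; rewrite /wall_radius; nra.
Qed.

Lemma continuous_norm2 :
  continuous (fun v : (R * R) * R => v.1.1 ^+ 2 + v.1.2 ^+ 2).
Proof.
move=> v; apply: cvgD.
- apply: (@continuous_comp _ _ _ (fun v : (R * R) * R => v.1.1) (fun x => x ^+ 2));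
    last exact: exprn_continuous.
  by apply: continuous_comp; exact: cvg_fst.
- apply: (@continuous_comp _ _ _ (fun v : (R * R) * R => v.1.2) (fun x => x ^+ 2));
    last exact: exprn_continuous.
  by apply: continuous_comp; [exact: cvg_fst | exact: cvg_snd].
Qed.

Lemma closed_solid_cylinder (h : R) : closed (solid_cylinder h).
Proof.
have snd_c : continuous (fun v : (R * R) * R => v.2) by move=> v; exact: cvg_snd.
have -> : solid_cylinder h = ((fun v => v.2) @^-1` [set x | 0 <= x]) `&`
    ((fun v => v.2) @^-1` [set x | x <= h]) `&`
    ((fun v => v.1.1 ^+ 2 + v.1.2 ^+ 2) @^-1` [set x | x <= 9]).
  by apply/seteqP; split=> v /=; rewrite /solid_cylinder /=;
    [move=> [/andP[]]|move=> [[-> ->]]].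
apply: closedI; first apply: closedI.
- by move/continuous_closedP: snd_c; apply; exact: closed_ge.
- by move/continuous_closedP: snd_c; apply; exact: closed_le.
- by move/continuous_closedP: continuous_norm2; apply; exact: closed_le.
Qed.

Lemma compact_solid_cylinder (h : R) : compact (solid_cylinder h).
Proof.
have box_compact : compact ((`[-3, 3] `*` `[-3, 3]) `*` `[0, h] : set ((R * R) * R)).
  by apply: compact_setX; [apply: compact_setX|]; exact: segment_compact.
apply: (subclosed_compact (closed_solid_cylinder h) box_compact).
move=> v [/andP[v2_ge v2_le] v_le].
have x_le : v.1.1 ^+ 2 <= 9 by move: v_le; have := sqr_ge0 v.1.2; lra.
have y_le : v.1.2 ^+ 2 <= 9 by move: v_le; have := sqr_ge0 v.1.1; lra.
by split; [split|]; rewrite /= in_itv /=; apply/andP; split => //; nra.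
Qed.

(* Clamping the height at c > 0 makes the chart continuous everywhere; it
   agrees with the wall parametrisation (z, phi) for z >= c. *)
Definition wall_chart (p c : R) (u : R * R) : (R * R) * R :=
  cyl (wall_radius p (Num.max u.1 c) u.2) u.2 u.1.

Lemma continuous_wall_chart (p c : R) : 0 < c -> continuous (wall_chart p c).
Proof.
move=> c_gt0; have fst_c : continuous (fun u : R * R => u.1) by move=> u; exact: cvg_fst.
have snd_c : continuous (fun u : R * R => u.2) by move=> u; exact: cvg_snd.
apply: continuous_cyl => // u; apply: cvgD; last exact: cvg_cst.
apply: cvgM; first by apply: cvgM; [apply: cvg_norm; exact: snd_c | exact: cvg_cst].
apply: continuous_comp; last exact: continuous_sin.
apply: cvgM; first exact: cvg_cst.
have max_c : continuous (fun u : R * R => Num.max u.1 c).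
  by apply: max_fun_continuous => //; exact: cst_continuous.
apply: cvgV; last exact: max_c.
by rewrite gt_eqF // (lt_le_trans c_gt0) // le_max lexx orbT.
Qed.

Lemma wall_above_chart (m p c : R) : 0 < c ->
  wall m p `&` [set v | c <= v.2] = wall_chart p c @` (`[c, m] `*` `[- pi, pi]).
Proof.
move=> c_gt0; apply/seteqP; split=> v.
  move=> [[z [phi [/andP[_ z_le] phi_bd ->]]] /= c_le].
  exists (z, phi); first by split; rewrite /= in_itv /= ?c_le.
  by rewrite /wall_chart /= max_l.
move=> [[z phi] []]; rewrite /= !in_itv /= => /andP[c_le z_le] phi_bd <-.
rewrite /wall_chart /= max_l //; split => //.
by exists z, phi; split; rewrite ?z_le ?(lt_le_trans c_gt0).
Qed.

Lemma compact_wall_above (m p c : R) : 0 < c ->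
  compact (wall m p `&` [set v | c <= v.2]).
Proof.
move=> c_gt0; rewrite wall_above_chart //; apply: continuous_compact.
  by apply: continuous_subspaceT; exact: continuous_wall_chart.
by apply: compact_setX; exact: segment_compact.
Qed.

Lemma closed_harmonic_vase (m p : R) : 0 < m -> closed (harmonic_vase m p).
Proof.
move=> m_gt0 v HVv.
have [/andP[v2_ge0 _] v_le9] : solid_cylinder m v.
  apply: closed_solid_cylinder.
  by apply: closureS HVv; exact: harmonic_vase_sub_cylinder.
have [v2_eq0|v2_neq0] := eqVneq v.2 0; first by left.
have v2_gt0 : 0 < v.2 by rewrite lt_neqAle eq_sym v2_neq0.
pose c := v.2 / 2; have c_gt0 : 0 < c by rewrite divr_gt0.
have high_near_v : nbhs v [set w | c <= w.2].
  apply: (filterS (P := [set w | c < w.2])) => [w /ltW //|].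
  apply: (cvg_snd (lt_nbhsr _)); rewrite /c; lra.
have HV_above : harmonic_vase m p `&` [set w | c <= w.2] `<=`
    wall m p `&` [set w | c <= w.2].
  move=> w [[[w2_eq0 _]|Ww] c_le]; last by [].
  by move: c_le => /=; rewrite w2_eq0 leNgt c_gt0.
have closed_wall_above : closed (wall m p `&` [set w | c <= w.2]).
  by apply: compact_closed; [exact: norm_hausdorff | exact: compact_wall_above].
have HV_above_v := closure_setI_nbhs HVv high_near_v.
by have [Wv _] := closed_wall_above v (closureS HV_above HV_above_v); right.
Qed.

End HarmonicVase.

Theorem mainTheorem2 (R : realType) (m p : R) (hm : 0 < m) (hp : 0 < p) :
  compact (harmonic_vase m p).
Proof.
apply: (subclosed_compact (closed_harmonic_vase m p hm) (compact_solid_cylinder m)).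
exact: harmonic_vase_sub_cylinder.
Qed.
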